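(* For every permutation $\pi$ in the domain of $\psi_p$ (respectively $\psi_q$, $\psi_s$), the permutation $\psi_p(\pi)$ (respectively $\psi_q(\pi)$, $\psi_s(\pi)$) has the same number of recoils as $\pi$. For every $\pi$ in the domain of $\psi_r$, $\psi_r(\pi)$ has exactly one more recoil than $\pi$.
   Context: Permutations are in one-line form; $e_n$ is the identity of $S_n$, $e_0$ the empty permutation. Evil-avoiding: avoids $2413,4132,4213,3214$. A recoil of $\pi\in S_n$ is $i\in\{1,\dots,n-1\}$ with $\pi^{-1}_i>\pi^{-1}_{i+1}$. $\rho_{i,j}(\pi)\in S_{n+1}$ ($\pi\in S_n$, $1\le i,j\le n+1$) increases every entry $\ge i$ by $1$ and inserts $i$ at position $j$; $\gamma_{a,b}(\pi)$ ($a>b$) moves the entry at position $a$ to position $b$. $\pi\in S_n$ is $(a,b)$-sandwiched ($a\ge0,b\ge1$) if $(\pi_1,\dots,\pi_a)=(1,\dots,a)$ and $(\pi_{n-b+1},\dots,\pi_n)=(a+1,\dots,a+b)$. Operators: $\psi_p=\rho_{1,1}$ on non-identity evil-avoiding permutations; $\psi_q$ on non-identity evil-avoiding $\pi\in S_n$ with smallest recoil $t$: $\psi_q(\pi)=\gamma_{n-b+2,a+2}(\rho_{t+1,1}(\pi))$ if $\pi$ is $(a,b)$-sandwiched, else $\rho_{t+1,1}(\pi)$; $\psi_r(\pi)=\rho_{1,n+1}(\pi)$ on evil-avoiding $\pi\in S_n$, $n\ge1$; $\psi_s(\pi)=\rho_{\pi_n+1,n+1}(\pi)$ (and $\psi_s(e_0)=[1]$)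 on evil-avoiding $\pi\in S_n$ that are either $e_n$ ($n\ge0$) or satisfy $(\pi_{n-t+1},\dots,\pi_n)=(1,\dots,t)$ for some $t\ge1$. *)

(* Permutations of {1..n} in one-line form as [seq nat]. *)
From mathcomp Require Import all_boot.
Set Implicit Arguments. Unset Strict Implicit. Unset Printing Implicit Defensive.

Definition is_perm (s : seq nat) : bool := perm_eq s (iota 1 (size s)).

Definition idperm (n : nat) : seq nat := iota 1 n.

Definition order_iso (u p : seq nat) : Prop :=
  size u = size p /\
  forall i j, i < size p -> j < size p ->
    (nth 0 u i < nth 0 u j) = (nth 0 p i < nth 0 p j).

Definition contains (s p : seq nat) : Prop :=
  exists m : bitseq, order_iso (mask m s) p.

Definition avoids (s p : seq nat) : Prop := ~ contains s p.

Definition evil_avoiding (s : seq nat) : Prop :=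
  is_perm s /\ avoids s [:: 2; 4; 1; 3] /\ avoids s [:: 4; 1; 3; 2]
  /\ avoids s [:: 4; 2; 1; 3] /\ avoids s [:: 3; 2; 1; 4].

(* position (1-indexed) of value v in s is (index v s).+1;
   recoil i (1 <= i <= n-1): pi^{-1}_i > pi^{-1}_{i+1} *)
Definition recoils (s : seq nat) : seq nat :=
  [seq i <- iota 1 (size s).-1 | index i.+1 s < index i s].

Definition nrecoils (s : seq nat) : nat := size (recoils s).

(* rho_{i,j}: increase entries >= i by 1, insert i at position j (1-indexed) *)
Definition rho (i j : nat) (s : seq nat) : seq nat :=
  let t := [seq (if i <= x then x.+1 else x) | x <- s] in
  take j.-1 t ++ i :: drop j.-1 t.

(* gamma_{a,b} (a > b): move the entry at position a to position b *)
Definition gamma (a b : nat) (s : seq nat) : seq nat :=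
  let x := nth 0 s a.-1 in
  let s' := take a.-1 s ++ drop a s in
  take b.-1 s' ++ x :: drop b.-1 s'.

Definition sandwiched (a b : nat) (s : seq nat) : bool :=
  [&& 1 <= b, a + b <= size s, take a s == iota 1 a
    & drop (size s - b) s == iota a.+1 b].

Definition min_recoil (s : seq nat) : nat := head 0 (recoils s).

Definition psi_p (s : seq nat) : seq nat := rho 1 1 s.

Definition psi_q (s : seq nat) : seq nat :=
  let n := size s in
  let t := min_recoil s in
  match [pick ab : 'I_n.+1 * 'I_n.+1 | sandwiched ab.1 ab.2 s] with
  | Some ab => gamma (n - ab.2 + 2) (ab.1 + 2) (rho t.+1 1 s)
  | None => rho t.+1 1 s
  end.

Definition psi_r (s : seq nat) : seq nat := rho 1 (size s).+1 s.

Definition psi_s (s : seq nat) : seq nat :=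
  if s is [::] then [:: 1] else rho (last 0 s).+1 (size s).+1 s.

Definition psi_s_dom (s : seq nat) : Prop :=
  evil_avoiding s /\
  (s = idperm (size s) \/
   exists t, 1 <= t /\ t <= size s /\ drop (size s - t) s = iota 1 t).

(* Inserting a new value i into a permutation (rho) leaves every recoil away from
   i in place: a recoil k < i - 1 stays at k and a recoil k >= i moves to k + 1,
   so only the recoils at i - 1 and i of the result, and the recoil at i - 1 of
   the original, have to be inspected.  For psi_p the new minimum in front creates
   no recoil, and for psi_r the new minimum at the end creates exactly one.  For
   psi_q and psi_s the value t + 1 is inserted next to a recoil t of the original
   (the smallest recoil, resp. the last entry when it is not the maximum): that
   recoil disappears and exactly one of t, t + 1 becomes a recoil.  The correction
   gamma in the sandwiched case of psi_q moves the single value a + 1; moving a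
   value x can only affect the recoils at x - 1 and x, and a direct computation
   shows both are unchanged. *)

From mathcomp Require Import all_boot zify.
Set Implicit Arguments. Unset Strict Implicit. Unset Printing Implicit Defensive.

Definition recoil_at (s : seq nat) (k : nat) : bool := index k.+1 s < index k s.

Lemma nrecoilsE s : nrecoils s = count (recoil_at s) (iota 1 (size s).-1).
Proof. by rewrite /nrecoils /recoils size_filter. Qed.

Lemma ltn_bump2 h i j : (bump h i < bump h j) = (i < j).
Proof. by rewrite !ltnNge leq_bump2. Qed.

Lemma unbump_small h i : i <= h -> unbump h i = i.
Proof. by rewrite /unbump => /leq_gtF ->; rewrite subn0. Qed.

Lemma unbump_large h i : h < i -> unbump h i = i.-1.
Proof. by rewrite /unbump => ->; rewrite subn1. Qed.

Lemma ltn_unbump2 h i j : i != h -> j != h -> (unbump h i < unbump h j) = (i < j).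
Proof. by rewrite /unbump; lia. Qed.

Lemma index_rem (x y : nat) s : y != x ->
  index y (rem x s) = unbump (index x s) (index y s).
Proof.
move=> yx; elim: s => [|z s IHs] /=; first by rewrite /unbump.
have [-> | zx] := eqVneq z x.
  by rewrite eq_sym (negbTE yx) /unbump /= subn1.
rewrite /=; case: eqP => _; first by rewrite /unbump.
by rewrite IHs unbumpS.
Qed.

Lemma index_neq (x y : nat) w : x \in w -> y != x -> index y w != index x w.
Proof.
move=> xw; apply: contraNneq => idx; apply/eqP/(index_inj 0 _ xw idx).
by rewrite -index_mem idx index_mem.
Qed.

(* [0 < y] rules out the default value of [nth 0]. *)
Lemma index_nth_pos (s : seq nat) i y : uniq s -> 0 < y -> nth 0 s i = y ->
  index y s = i.
Proof.
move=> s_uniq y_gt0 nth_y; rewrite -nth_y index_uniq // ltnNge.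
by apply: contraTN y_gt0 => /(nth_default 0); rewrite nth_y => ->.
Qed.

Lemma mem_perm s x : is_perm s -> (x \in s) = (0 < x <= size s).
Proof. by move=> s_perm; rewrite (perm_mem s_perm) mem_iota add1n ltnS. Qed.

Lemma is_perm_uniq s : is_perm s -> uniq s.
Proof. by move=> s_perm; rewrite (perm_uniq s_perm) iota_uniq. Qed.

Definition insert_at (k : nat) (x : nat) (w : seq nat) : seq nat :=
  take k w ++ x :: drop k w.

Lemma perm_insert_at k x w : perm_eq (insert_at k x w) (x :: w).
Proof. by rewrite /insert_at -cat1s perm_catCA cat_take_drop. Qed.

Lemma size_insert_at k x w : size (insert_at k x w) = (size w).+1.
Proof. by rewrite (perm_size (perm_insert_at k x w)). Qed.

Lemma index_insert_at k x y w : k <= size w -> y != x ->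
  index y (insert_at k x w) = bump k (index y w).
Proof.
elim: w k => [|z w IHw] [|k] //= kw yx; rewrite /insert_at /=.
- by rewrite eq_sym (negbTE yx).
- by rewrite eq_sym (negbTE yx).
- by case: eqP => _; rewrite ?bumpS -?IHw.
Qed.

Lemma index_insert_at_new k x w : k <= size w -> x \notin w ->
  index x (insert_at k x w) = k.
Proof.
move=> kw xw; rewrite /insert_at index_cat ifF ?size_takel /= ?eqxx ?addn0 //.
by apply: contraNF xw; apply: mem_take.
Qed.

Lemma rhoE i j s : rho i j s = insert_at j.-1 i (map (bump i) s).
Proof. by congr insert_at; apply: eq_map => x; rewrite /bump; case: leqP. Qed.

Lemma size_rho i j s : size (rho i j s) = (size s).+1.
Proof. by rewrite rhoE size_insert_at size_map. Qed.

Lemma uniq_rho i j s : uniq s -> uniq (rho i j s).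
Proof.
move=> s_uniq; rewrite rhoE (perm_uniq (perm_insert_at _ _ _)) /=.
rewrite map_inj_uniq ?s_uniq ?andbT; last exact: can_inj (bumpK i).
by apply/mapP=> -[x _]; apply/eqP; apply: neq_bump.
Qed.

Section RhoIndex.
Variables (i j : nat) (s : seq nat).
Hypothesis j_le : j <= (size s).+1.

Lemma index_rho_new : index i (rho i j s) = j.-1.
Proof.
rewrite rhoE index_insert_at_new ?size_map //; first by lia.
by apply/mapP=> -[x _]; apply/eqP; apply: neq_bump.
Qed.

Lemma index_rho y : y != i ->
  index y (rho i j s) = bump j.-1 (index (unbump i y) s).
Proof.
move=> yi; rewrite rhoE index_insert_at ?size_map //; last by lia.
by rewrite -{1}(unbumpK yi) index_map //; apply: can_inj (bumpK i).
Qed.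

Lemma recoil_rho_low k : k.+1 < i -> recoil_at (rho i j s) k = recoil_at s k.
Proof.
by move=> ki; rewrite /recoil_at !index_rho ?ltn_bump2 ?unbump_small //; lia.
Qed.

Lemma recoil_rho_high k : i <= k -> recoil_at (rho i j s) k.+1 = recoil_at s k.
Proof.
by move=> ik; rewrite /recoil_at !index_rho ?ltn_bump2 ?unbump_large //; lia.
Qed.

Lemma recoil_rho_new : recoil_at (rho i j s) i = (bump j.-1 (index i s) < j.-1).
Proof. by rewrite /recoil_at index_rho_new // index_rho ?unbump_large //; lia. Qed.

End RhoIndex.

Lemma recoil_rho_below i j s : j <= (size s).+1 ->
  recoil_at (rho i.+1 j s) i = (j.-1 < bump j.-1 (index i s)).
Proof.
by move=> j_le; rewrite /recoil_at index_rho_new // index_rho ?unbump_small //; lia.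
Qed.

Lemma count_iota_last (P Q : pred nat) m : (forall k, 0 < k < m -> P k = Q k) ->
  count P (iota 1 m) = count Q (iota 1 m.-1) + ((0 < m) && P m).
Proof.
case: m => [|m] PQ //; rewrite -(addn1 m) iotaD count_cat addn1 add1n /= !addn0.
by congr (_ + _); apply: eq_in_count => k; rewrite mem_iota => /PQ; apply; lia.
Qed.

Lemma count_iota_shift (P Q : pred nat) m n : (forall k, m <= k -> P k.+1 = Q k) ->
  count P (iota m.+1 n) = count Q (iota m n).
Proof. by elim: n m => //= n IHn m PQ; rewrite PQ // IHn // => k mk; apply: PQ; lia. Qed.

Lemma count_iota_splice (P Q : pred nat) m n : m <= n ->
    (forall k, 0 < k < m -> P k = Q k) -> (forall k, m < k -> P k.+1 = Q k) ->
  count P (iota 1 n) + ((0 < m < n) && Q m) =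
  count Q (iota 1 n.-1) + ((0 < m) && P m) + ((m < n) && P m.+1).
Proof.
move=> mn low high; have [{}mn | nm] := ltnP m n; last first.
  have -> : n = m by lia.
  by rewrite /= andbF !addn0 (count_iota_last low).
have [c ->] : exists c, n = m + c.+1 by exists (n - m).-1; lia.
rewrite iotaD addnS /= iotaD !count_cat add1n /=.
rewrite (count_iota_last low) (@count_iota_last Q Q m (fun _ _ => erefl)).
rewrite (@count_iota_shift P Q m.+1 c high).
by case: (0 < m); lia.
Qed.

(* Each guard says that the exceptional recoil lies in the range [1, size - 1] of
   its permutation. *)
Lemma nrecoils_rho m j s : m <= size s -> j <= (size s).+1 ->
  nrecoils (rho m.+1 j s) + ((0 < m < size s) && recoil_at s m) =
  nrecoils s + ((0 < m) && recoil_at (rho m.+1 j s) m)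
             + ((m < size s) && recoil_at (rho m.+1 j s) m.+1).
Proof.
move=> m_le j_le; rewrite !nrecoilsE size_rho /=.
apply: count_iota_splice => // k mk; first by rewrite recoil_rho_low //; lia.
by rewrite recoil_rho_high.
Qed.

Lemma nrecoils_psi_p s : nrecoils (psi_p s) = nrecoils s.
Proof.
have := @nrecoils_rho 0 1 s (leq0n _) (ltn0Sn _).
by rewrite recoil_rho_new //= andbF !addn0.
Qed.

Lemma nrecoils_psi_r s : is_perm s -> 0 < size s ->
  nrecoils (psi_r s) = (nrecoils s).+1.
Proof.
move=> s_perm s_gt0; rewrite /psi_r.
have := @nrecoils_rho 0 (size s).+1 s (leq0n _) (leqnn _).
have one_s : index 1 s < size s by rewrite index_mem mem_perm.
by rewrite recoil_rho_new //= s_gt0 /bump /=; lia.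
Qed.

Lemma nrecoils_rho_recoil s t : 0 < t < size s -> recoil_at s t ->
  nrecoils (rho t.+1 1 s) = nrecoils s.
Proof.
move=> t_range t_rec; have t_le : t <= size s by lia.
have := @nrecoils_rho t 1 s t_le (ltn0Sn _).
by rewrite recoil_rho_below // recoil_rho_new // t_range t_rec /bump; lia.
Qed.

Lemma nrecoils_rho_min_recoil s : nrecoils (rho (min_recoil s).+1 1 s) = nrecoils s.
Proof.
rewrite /min_recoil; case Es: (recoils s) => [|t r] /=; first exact: nrecoils_psi_p.
have : t \in recoils s by rewrite Es mem_head.
rewrite mem_filter mem_iota => /andP [t_rec t_range].
by apply: nrecoils_rho_recoil => //; lia.
Qed.

Lemma nrecoils_psi_s s : is_perm s -> nrecoils (psi_s s) = nrecoils s.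
Proof.
case: s => [//|x s'] s_perm; set s := x :: s' in s_perm *.
set t := last 0 s; set n := size s.
have -> : psi_s s = rho t.+1 n.+1 s by [].
have t_s : t \in s by apply: mem_last.
have t_idx : index t s = n.-1 by apply: index_last; apply: is_perm_uniq.
have := t_s; rewrite mem_perm // => /andP [t_gt0 t_le].
have := @nrecoils_rho t n.+1 s t_le (leqnn _).
rewrite recoil_rho_below // recoil_rho_new // succnK t_idx /bump.
have [t_lt | _] := ltnP t n; last by rewrite !andFb !andbF; lia.
have t1_s : t.+1 \in s by rewrite mem_perm //; lia.
have t1_idx : index t.+1 s < n by rewrite index_mem.
have t1_ne : index t.+1 s != n.-1.
  by rewrite -t_idx; apply: contraTneq isT => /(index_inj 0 t1_s t_s); lia.
rewrite /recoil_at t_idx t_gt0 !andbT; lia.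
Qed.

Definition move_to (q : nat) (x : nat) (w : seq nat) : seq nat :=
  insert_at q x (rem x w).

Section MoveTo.
Variables (q x : nat) (w : seq nat).
Hypotheses (x_w : x \in w) (q_lt : q < size w).

Let q_le_rem : q <= size (rem x w).
Proof. by rewrite size_rem // -ltnS prednK // (leq_ltn_trans _ q_lt). Qed.

Lemma size_move_to : size (move_to q x w) = size w.
Proof. by rewrite size_insert_at size_rem // prednK // (leq_ltn_trans _ q_lt). Qed.

Lemma index_move_to y : y != x ->
  index y (move_to q x w) = bump q (unbump (index x w) (index y w)).
Proof. by move=> yx; rewrite index_insert_at ?index_rem ?q_le_rem. Qed.

Lemma index_move_to_self : uniq w -> index x (move_to q x w) = q.
Proof. by move=> w_uniq; rewrite index_insert_at_new ?q_le_rem ?mem_rem_uniqF. Qed.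

Lemma recoil_move_to k : k != x -> k.+1 != x ->
  recoil_at (move_to q x w) k = recoil_at w k.
Proof.
move=> kx k1x; rewrite /recoil_at !index_move_to // ltn_bump2.
by rewrite ltn_unbump2 // index_neq.
Qed.

Lemma nrecoils_move_to :
    (0 < x.-1 -> recoil_at (move_to q x w) x.-1 = recoil_at w x.-1) ->
    recoil_at (move_to q x w) x = recoil_at w x ->
  nrecoils (move_to q x w) = nrecoils w.
Proof.
move=> below at_x; rewrite !nrecoilsE size_move_to; apply: eq_in_count => k.
rewrite mem_iota => /andP [k_gt0 _].
have [-> // | kx] := eqVneq k x; have [k1x | k1x] := eqVneq k.+1 x.
  by move: below; rewrite -k1x; apply.
exact: recoil_move_to.
Qed.

End MoveTo.

Lemma gammaE p q u : uniq u -> 0 < p <= size u ->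
  gamma p q u = move_to q.-1 (nth 0 u p.-1) u.
Proof.
move=> u_uniq p_range; rewrite /gamma /move_to remE index_uniq //; last by lia.
by case: p p_range.
Qed.

Lemma min_recoil_eq s t : 0 < t < size s -> recoil_at s t ->
  (forall k, 0 < k < t -> ~~ recoil_at s k) -> min_recoil s = t.
Proof.
move=> t_range t_rec before_t; rewrite /min_recoil /recoils.
have -> : (size s).-1 = t.-1 + (size s - t).-1.+1 by lia.
rewrite iotaD filter_cat (@eq_in_filter _ _ pred0) ?filter_pred0; last first.
  by move=> k; rewrite mem_iota => k_range; apply/negbTE/before_t; lia.
by rewrite add1n prednK /= ?ifT //; lia.
Qed.

Section Sandwiched.
Variables (a b : nat) (s : seq nat).
Hypotheses (s_perm : is_perm s) (s_sand : sandwiched a b s).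

Lemma index_sandwiched y : 0 < y <= a + b ->
  index y s = if y <= a then y.-1 else size s - b + (y - a.+1).
Proof.
case/and4P: s_sand => b_gt0 ab_le /eqP s_take /eqP s_drop y_range.
have s_uniq := is_perm_uniq s_perm.
case: ifP => y_a.
- apply: index_nth_pos => //; first by lia.
  by rewrite -(nth_take 0 (_ : y.-1 < a)) ?s_take ?nth_iota; lia.
- apply: index_nth_pos => //; first by lia.
  by rewrite -nth_drop s_drop nth_iota; lia.
Qed.

Hypothesis s_nid : s <> idperm (size s).

Lemma sandwiched_size : a + b < size s.
Proof.
case/and4P: s_sand => _ ab_le /eqP s_take /eqP s_drop.
rewrite ltn_neqAle ab_le andbT; apply/eqP => ab_n; apply: s_nid.
move: s_drop; rewrite (_ : size s - b = a) => [s_drop|]; last by lia.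
by rewrite /idperm -ab_n iotaD add1n -s_take -s_drop cat_take_drop.
Qed.

Lemma min_recoil_sandwiched : min_recoil s = a + b.
Proof.
have ab_lt := sandwiched_size; have b_gt0 : 0 < b by case/and4P: s_sand.
apply: min_recoil_eq; first by lia.
- have ab_idx : index (a + b) s = (size s).-1.
    by rewrite index_sandwiched; try case: ifP; lia.
  have ab1_idx : index (a + b).+1 s < size s by rewrite index_mem mem_perm //; lia.
  have ab_s : a + b \in s by rewrite mem_perm //; lia.
  have := index_neq ab_s (_ : (a + b).+1 != a + b).
  by rewrite /recoil_at ab_idx; lia.
- move=> k k_range; rewrite /recoil_at !index_sandwiched; try lia.
  by do 2!case: ifP; lia.
Qed.

Lemma nrecoils_psi_q_sandwiched :
  nrecoils (gamma (size s - b + 2) (a + 2) (rho (min_recoil s).+1 1 s)) = nrecoils s.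
Proof.
have ab_lt := sandwiched_size; have b_gt0 : 0 < b by case/and4P: s_sand.
rewrite -[RHS](nrecoils_rho_min_recoil s) min_recoil_sandwiched.
set u := rho (a + b).+1 1 s.
have u_size : size u = (size s).+1 by rewrite size_rho.
have u_uniq : uniq u by apply/uniq_rho/is_perm_uniq.
have index_u y : 0 < y <= a + b -> index y u = (index y s).+1.
  by move=> y_range; rewrite index_rho ?unbump_small /bump; lia.
have x_idx : index a.+1 u = size s - b + 1.
  by rewrite index_u ?index_sandwiched; try case: ifP; lia.
have x_u : a.+1 \in u by rewrite -index_mem x_idx u_size; lia.
rewrite gammaE ?u_size //; last by lia.
rewrite (_ : (size s - b + 2).-1 = index a.+1 u) ?nth_index ?x_idx //; last by lia.
rewrite (_ : (a + 2).-1 = a.+1); last by lia.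
have q_lt : a.+1 < size u by rewrite u_size; lia.
set v := move_to a.+1 a.+1 u.
have v_x : index a.+1 v = a.+1 by rewrite index_move_to_self.
have index_v y : y != a.+1 -> index y v = bump a.+1 (unbump (size s - b + 1) (index y u)).
  by move=> y_x; rewrite index_move_to // x_idx.
apply: nrecoils_move_to => //=.
- move=> a_gt0; rewrite /recoil_at v_x x_idx index_v; last by lia.
  by rewrite index_u ?index_sandwiched; try case: ifP; rewrite /bump /unbump; lia.
- have a2_idx : index a.+2 u = if b == 1 then 0 else size s - b + 2.
    case: eqP => b1; first by rewrite (_ : a.+2 = (a + b).+1) ?index_rho_new //; lia.
    by rewrite index_u ?index_sandwiched; try case: ifP; lia.
  rewrite /recoil_at v_x x_idx index_v ?a2_idx; last by lia.
  by rewrite /bump /unbump; case: eqP; lia.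
Qed.

End Sandwiched.

Theorem proposition5p18 :
  (forall s : seq nat, evil_avoiding s -> s <> idperm (size s) ->
     nrecoils (psi_p s) = nrecoils s) /\
  (forall s : seq nat, evil_avoiding s -> s <> idperm (size s) ->
     nrecoils (psi_q s) = nrecoils s) /\
  (forall s : seq nat, psi_s_dom s ->
     nrecoils (psi_s s) = nrecoils s) /\
  (forall s : seq nat, evil_avoiding s -> 1 <= size s ->
     nrecoils (psi_r s) = (nrecoils s).+1).
Proof.
split; [|split; [|split]].
- by move=> s _ _; apply: nrecoils_psi_p.
- move=> s [s_perm _] s_nid; rewrite /psi_q.
  case: pickP => [[a b] /= s_sand | _]; last exact: nrecoils_rho_min_recoil.
  exact: nrecoils_psi_q_sandwiched s_perm s_sand s_nid.
- by move=> s [[s_perm _] _]; apply: nrecoils_psi_s.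
- by move=> s [s_perm _]; apply: nrecoils_psi_r.
Qed.
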